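(* If $\tau$ is measurable and boundedly oscillating, then there exist $g\in C^\infty(\mathbb{R})$ vanishing on $(-\infty,0]$ with $g^{(n)}\in L^\infty(\mathbb{R})$ for all $n\in\mathbb{N}$, and $x_0$ such that $\tau(x)=\int_0^x g(y)\,\mathrm{d}y+O(1)$ for $x\in[x_0,\infty)$.
   Context: A function $\tau$ is boundedly oscillating if there is $\delta>0$ with $\limsup_{x\to\infty}\sup_{h\in[0,\delta]}|\tau(x+h)-\tau(x)|<\infty$. *)

From HB Require Import structures.
From mathcomp Require Import all_boot all_order all_algebra.
From mathcomp Require Import all_classical all_reals all_analysis.
Set Implicit Arguments. Unset Strict Implicit. Unset Printing Implicit Defensive.
Import Order.TTheory GRing.Theory Num.Theory.
Import numFieldNormedType.Exports.
Local Open Scope classical_set_scope.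
Local Open Scope ring_scope.

Definition lebesgue_measurable_set {R : realType} (A : set R) : Prop :=
  exists B : set (measurableTypeR R), measurable B /\
    (@lebesgue_measure R).-negligible ((A `\` B) `|` (B `\` A)).

Definition lebesgue_measurable_fun {R : realType} (f : R -> R) : Prop :=
  forall B : set (measurableTypeR R), measurable B ->
    lebesgue_measurable_set (f @^-1` B).

Definition boundedly_oscillating {R : realType} (tau : R -> R) : Prop :=
  exists2 delta : R, 0 < delta &
    (limf_esup
       (fun x : R => ereal_sup [set (`|tau (x + h) - tau x|)%:E | h in (`[0%R, delta]%classic : set R)])
       (pinfty_nbhs R) < +oo)%E.

(* Interpolate the integer samples of tau smoothly.  With a C^oo step S, equal to 0
   on (-oo, 0] and to 1 on [1, +oo) and built from exp(-1/t), let
   G(x) = tau(n) - tau(K) + (tau(n+1) - tau(n)) S(x - n) on [n, n+1] for n >= K, and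
   G = 0 on (-oo, K].  All derivatives of S vanish outside (0, 1), so G is smooth and
   each G^(k+1) is bounded by a multiple of sup_{n >= K} |tau(n+1) - tau(n)|, which bounded
   oscillation (chained from steps of size delta to steps of size 1) makes finite.
   Then g = G' works: its integral over [0, x] is G(x), which stays within
   |tau(K)| + 2 sup_{x >= K, 0 <= h <= 1} |tau(x+h) - tau(x)| of tau(x). *)

From HB Require Import structures.
From mathcomp Require Import all_boot all_order all_algebra.
From mathcomp Require Import all_classical all_reals all_analysis.
From mathcomp Require Import ring.
Import Order.TTheory GRing.Theory Num.Theory.
Import numFieldNormedType.Exports.
Local Open Scope classical_set_scope.
Local Open Scope ring_scope.

Section DerivableUpto.
Context {R : realFieldType}.
Implicit Types (f g : R -> R) (a b c : R) (n : nat).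

Definition derivable_upto n f :=
  forall k x, (k <= n)%N -> derivable (derive1n k f) x 1.

Lemma derivable_upto0 f : derivable_upto 0 f <-> forall x, derivable f x 1.
Proof. by split=> [df x|df [|k] x //]; exact: (df 0%N). Qed.

Lemma derivable_uptoS n f :
  derivable_upto n.+1 f <-> (forall x, derivable f x 1) /\ derivable_upto n (derive1 f).
Proof.
split=> [df|[df dDf] [|k] x kn //]; last by rewrite derive1Sn; exact: dDf.
by split=> [x|k x kn]; [exact: (df 0%N)|rewrite -derive1Sn; exact: df].
Qed.

Lemma derivable_uptoW n f : derivable_upto n.+1 f -> derivable_upto n f.
Proof. by move=> df k x kn; apply: df; exact: leqW. Qed.

Lemma derive1_cst_fun c : derive1 (fun _ : R => c) = fun _ => 0.
Proof. by apply/funext => x; exact: derive1_cst. Qed.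

Lemma derive1n_cst n c : derive1n n.+1 (fun _ : R => c) = fun _ => 0.
Proof.
elim: n => [|n IH]; first by rewrite derive1n1 derive1_cst_fun.
by rewrite derive1nS IH derive1_cst_fun.
Qed.

Lemma derivable_upto_cst n c : derivable_upto n (fun _ => c).
Proof.
elim: n c => [|n IH] c; first by apply/derivable_upto0 => x; exact: derivable_cst.
apply/derivable_uptoS; split=> [x|]; first exact: derivable_cst.
by rewrite derive1_cst_fun.
Qed.

Lemma derive1D f g x : derivable f x 1 -> derivable g x 1 ->
  derive1 (fun x => f x + g x) x = derive1 f x + derive1 g x.
Proof. by move=> df dg; rewrite !derive1E deriveD. Qed.

Lemma derive1M f g x : derivable f x 1 -> derivable g x 1 ->
  derive1 (fun x => f x * g x) x = derive1 f x * g x + f x * derive1 g x.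
Proof.
move=> df dg; rewrite !derive1E deriveM //.
by rewrite addrC /GRing.scale /= mulrC [f x * _]mulrC.
Qed.

Lemma derive1V f x : f x != 0 -> derivable f x 1 ->
  derive1 (fun x => (f x)^-1) x = - 1 * (derive1 f x * ((f x)^-1 * (f x)^-1)).
Proof.
move=> fx0 df; rewrite !derive1E deriveV //.
by rewrite /GRing.scale /= mulN1r mulNr mulrC -invrM ?unitfE // -expr2.
Qed.

Lemma derivable_uptoD n f g : derivable_upto n f -> derivable_upto n g ->
  derivable_upto n (fun x => f x + g x).
Proof.
elim: n f g => [|n IH] f g; first by rewrite !derivable_upto0 => df dg x; exact: derivableD.
move=> /derivable_uptoS[df dDf] /derivable_uptoS[dg dDg].
apply/derivable_uptoS; split=> [x|]; first exact: derivableD.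
have -> : derive1 (fun x => f x + g x) = fun x => derive1 f x + derive1 g x.
  by apply/funext => x; exact: derive1D.
exact: IH.
Qed.

Lemma derivable_uptoMl n c f : derivable_upto n f -> derivable_upto n (fun x => c * f x).
Proof.
elim: n f => [|n IH] f.
  by rewrite !derivable_upto0 => df x; apply: derivableM => //; exact: derivable_cst.
move=> /derivable_uptoS[df dDf]; apply/derivable_uptoS; split.
  by move=> x; apply: derivableM => //; exact: derivable_cst.
have -> : derive1 (fun x => c * f x) = fun x => c * derive1 f x.
  by apply/funext => x; rewrite derive1Ml.
exact: IH.
Qed.

Lemma derivable_uptoM n f g : derivable_upto n f -> derivable_upto n g ->
  derivable_upto n (fun x => f x * g x).
Proof.
elim: n f g => [|n IH] f g; first by rewrite !derivable_upto0 => df dg x; exact: derivableM.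
move=> Df Dg; have /derivable_uptoS[df dDf] := Df; have /derivable_uptoS[dg dDg] := Dg.
apply/derivable_uptoS; split=> [x|]; first exact: derivableM.
have -> : derive1 (fun x => f x * g x) = fun x => derive1 f x * g x + f x * derive1 g x.
  by apply/funext => x; exact: derive1M.
by apply: derivable_uptoD; apply: IH => //; exact: derivable_uptoW.
Qed.

Lemma derivable_uptoV n f : (forall x, f x != 0) -> derivable_upto n f ->
  derivable_upto n (fun x => (f x)^-1).
Proof.
move=> f0; elim: n f f0 => [|n IH] f f0.
  by rewrite !derivable_upto0 => df x; exact: derivableV.
move=> Df; have /derivable_uptoS[df dDf] := Df.
apply/derivable_uptoS; split=> [x|]; first exact: derivableV.
have -> : derive1 (fun x => (f x)^-1) = fun x => - 1 * (derive1 f x * ((f x)^-1 * (f x)^-1)).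
  by apply/funext => x; exact: derive1V.
apply: derivable_uptoMl; apply: derivable_uptoM => //.
by apply: derivable_uptoM; apply: IH => //; exact: derivable_uptoW.
Qed.

Lemma derivable_affine a b x : derivable (fun x : R => a * x + b) x 1.
Proof.
apply: derivableD; last exact: derivable_cst.
by apply: derivableM; [exact: derivable_cst|exact: derivable_id].
Qed.

Lemma derive1_affine a b x : derive1 (fun x : R => a * x + b) x = a.
Proof.
rewrite derive1E deriveD ?derivable_cst // derive_cst addr0 -derive1E.
by rewrite (derive1Ml (f := id)) ?derivable_id // derive1_id mulr1.
Qed.

Lemma derivable_comp_affine a b f x : derivable f (a * x + b) 1 ->
  derivable (fun x => f (a * x + b)) x 1.
Proof.
move=> df; apply/derivable1_diffP.
by apply: (differentiable_comp (f := fun x => a * x + b));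
  apply/derivable1_diffP; [exact: derivable_affine|exact: df].
Qed.

Lemma derivable_upto_comp_affine n a b f :
  derivable_upto n f -> derivable_upto n (fun x => f (a * x + b)).
Proof.
elim: n f => [|n IH] f.
  by rewrite !derivable_upto0 => df x; exact: derivable_comp_affine.
move=> /derivable_uptoS[df dDf]; apply/derivable_uptoS.
split=> [x|]; first exact: derivable_comp_affine.
have -> : derive1 (fun x => f (a * x + b)) = fun x => a * derive1 f (a * x + b).
  apply/funext => x.
  rewrite (derive1_comp (f := fun x => a * x + b) (derivable_affine a b x) (df _)).
  by rewrite derive1_affine mulrC.
by apply: derivable_uptoMl; exact: IH.
Qed.

Lemma derivable_upto_shift n b f :
  derivable_upto n f -> derivable_upto n (fun x => f (x + b)).
Proof.
move=> df; have -> : (fun x => f (x + b)) = fun x => f (1 * x + b).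
  by apply/funext => x; rewrite mul1r.
exact: derivable_upto_comp_affine.
Qed.

Lemma derive1nD n f g : derivable_upto n f -> derivable_upto n g ->
  derive1n n.+1 (fun x => f x + g x) = fun x => derive1n n.+1 f x + derive1n n.+1 g x.
Proof.
elim: n f g => [|n IH] f g.
  by rewrite !derivable_upto0 => df dg; apply/funext => x; rewrite !derive1n1; exact: derive1D.
move=> /derivable_uptoS[df dDf] /derivable_uptoS[dg dDg].
rewrite derive1Sn (_ : derive1 _ = fun x => derive1 f x + derive1 g x); last first.
  by apply/funext => x; exact: derive1D.
by rewrite IH // !derive1Sn.
Qed.

Lemma derive1nMl n c f : derivable_upto n f ->
  derive1n n.+1 (fun x => c * f x) = fun x => c * derive1n n.+1 f x.
Proof.
elim: n f => [|n IH] f.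
  by rewrite derivable_upto0 => df; apply/funext => x; rewrite !derive1n1 derive1Ml.
move=> /derivable_uptoS[df dDf].
rewrite derive1Sn (_ : derive1 _ = fun x => c * derive1 f x); last first.
  by apply/funext => x; rewrite derive1Ml.
by rewrite IH // !derive1Sn.
Qed.

Lemma derive1n_shift n b f :
  derive1n n (fun x => f (x + b)) = fun x => derive1n n f (x + b).
Proof.
elim: n f => [//|n IH] f; rewrite !derive1Sn -IH; congr (derive1n n _).
apply/funext => x; rewrite /derive1.
by under [in RHS]eq_fun do rewrite addrA.
Qed.

Lemma near_eq_derive1n n {f g} {x : R} : (\near x, f x = g x) ->
  \near x, derive1n n f x = derive1n n g x.
Proof.
move=> fg; elim: n => [//|n IH].
near=> y; rewrite !derive1nS !derive1E; apply: near_eq_derive.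
near: y; exact: (@near_join R^o _ _ IH).
Unshelve. all: by end_near. Qed.

Lemma near_eq_derivable1n n {f g} {x : R} : (\near x, f x = g x) ->
  derivable (derive1n n g) x 1 -> derivable (derive1n n f) x 1.
Proof.
move=> fg; apply: near_eq_derivable; near=> y; apply/esym.
by near: y; exact: near_eq_derive1n.
Unshelve. all: by end_near. Qed.

End DerivableUpto.

Section ExpInvPoly.
Context {R : realType}.
Implicit Types (p : {poly R}) (t u : R).

Definition exp_inv_poly p t : R := if 0 < t then p.[t^-1] * expR (- t^-1) else 0.

Definition exp_inv_dpoly p : {poly R} := 'X^2 * (p - p^`()).

Lemma normr_horner_le p u : 1 <= u ->
  `|p.[u]| <= (\sum_(i < size p) `|p`_i|) * u ^+ size p.
Proof.
move=> u1; rewrite horner_coef mulr_suml.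
apply: le_trans (ler_norm_sum _ _ _) _; apply: ler_sum => i _.
rewrite normrM normrX (ger0_norm (le_trans ler01 u1)).
by apply: ler_wpM2l => //; apply: ler_weXn2l => //; exact: ltnW.
Qed.

Lemma exprn_expRN_le_fact k u : 0 <= u -> u ^+ k.+1 * expR (- u) <= k.+1`!%:R.
Proof.
move=> u0; rewrite expRN -ler_pdivlMr ?invr_gt0 ?expR_gt0 // invrK.
rewrite -ler_pdivrMl ?ltr0n ?fact_gt0 // mulrC.
apply: le_trans (expR_ge1Dxn k u0); rewrite lerDr; exact: ler01.
Qed.

Lemma normr_horner_expRN_le p u : 1 <= u ->
  `|u * (p.[u] * expR (- u))| <= (\sum_(i < size p) `|p`_i|) * (size p).+2`!%:R * u^-1.
Proof.
move=> u1; have u0 : 0 < u by apply: lt_le_trans u1; exact: ltr01.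
set A := \sum_(i < size p) `|p`_i|; set d := size p.
have A0 : 0 <= A by apply: sumr_ge0 => i _; exact: normr_ge0.
rewrite !normrM (ger0_norm (ltW u0)) (ger0_norm (expR_ge0 _)).
apply: (@le_trans _ _ (u * (A * u ^+ d) * expR (- u))).
  rewrite mulrA; apply: ler_wpM2r; first exact: expR_ge0.
  by apply: ler_wpM2l; [exact: ltW|exact: normr_horner_le].
have -> : u * (A * u ^+ d) * expR (- u) = A * (u ^+ d.+2 * expR (- u)) * u^-1.
  by rewrite !exprS; field; exact: lt0r_neq0.
apply: ler_wpM2r; first by rewrite invr_ge0 ltW.
by apply: ler_wpM2l => //; exact: exprn_expRN_le_fact (ltW u0).
Qed.

Lemma derivable_inv t : t != 0 -> derivable (fun s : R => s^-1) t 1.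
Proof. by move=> t0; exact: (@derivableV R R^o (@id R) t 1 t0 (@derivable_id R R t 1)). Qed.

Lemma derive1_inv t : t != 0 -> derive1 (fun s : R => s^-1) t = - t ^- 2.
Proof.
move=> t0; rewrite derive1E (@deriveV R R^o (@id R) t 1 t0 (@derivable_id R R t 1)).
by rewrite derive_id /GRing.scale /= mulr1.
Qed.

Lemma is_derive_exp_inv_poly_gt0 p t : 0 < t ->
  is_derive t 1 (exp_inv_poly p) (exp_inv_poly (exp_inv_dpoly p) t).
Proof.
move=> t0; have tn0 : t != 0 by rewrite gt_eqF.
pose f := horner p \o (fun s : R => s^-1).
pose g := expR \o (fun s : R => - s^-1).
have df : derivable f t 1.
  apply/derivable1_diffP; apply: differentiable_comp; apply/derivable1_diffP.
    exact: derivable_inv.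
  exact: derivable_horner.
have dg : derivable g t 1.
  apply/derivable1_diffP; apply: differentiable_comp; apply/derivable1_diffP.
    by apply: derivableN; exact: derivable_inv.
  exact: derivable_expR.
apply: (@near_eq_is_derive _ _ _ (f * g)).
  by near=> s; rewrite /exp_inv_poly ifT //; near: s; exact: lt_nbhsr.
apply: DeriveDef; first exact: derivableM.
rewrite deriveM // -(derive1E g) -(derive1E f).
rewrite (derive1_comp (f := fun s : R => s^-1)); last 2 first.
- exact: derivable_inv.
- exact: derivable_horner.
rewrite (derive1_comp (f := fun s : R => - s^-1)); last 2 first.
- by apply: derivableN; exact: derivable_inv.
- exact: derivable_expR.
rewrite -derivE (derive1_inv _ tn0).
have -> : derive1 expR (- t^-1) = expR (- t^-1) :> R by rewrite derive1E; exact: derive_val.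
rewrite derive1E deriveN; last exact: derivable_inv.
rewrite -derive1E (derive1_inv _ tn0).
rewrite /exp_inv_poly t0 /exp_inv_dpoly /f /g /comp !hornerE /GRing.scale /= exprVn.
ring.
Unshelve. all: by end_near. Qed.

Lemma is_derive_exp_inv_poly_lt0 p t : t < 0 ->
  is_derive t 1 (exp_inv_poly p) (exp_inv_poly (exp_inv_dpoly p) t).
Proof.
move=> t0; rewrite {2}/exp_inv_poly ltNge (ltW t0) /=.
apply: (@near_eq_is_derive _ _ _ (cst 0)).
near=> s; rewrite /exp_inv_poly ifN //= -leNgt ltW //; near: s; exact: lt_nbhsl.
Unshelve. all: by end_near. Qed.

(* Flatness at 0: [exp_inv_poly p h / h = u p(u) e^-u] with [u = 1/h], which is [O(1/u)]. *)
Lemma is_derive_exp_inv_poly0 p :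
  is_derive (0 : R) (1 : R) (exp_inv_poly p) (exp_inv_poly (exp_inv_dpoly p) 0).
Proof.
rewrite {2}/exp_inv_poly ltxx.
set C := (\sum_(i < size p) `|p`_i|) * (size p).+2`!%:R.
have C0 : 0 <= C by apply: mulr_ge0 => //; apply: sumr_ge0 => i _; exact: normr_ge0.
suff lim0 : (fun h : R => h^-1 *: ((exp_inv_poly p \o shift 0) (h *: 1) - exp_inv_poly p 0))
    @ 0^' --> (0 : R).
  by apply: DeriveDef; [exact: cvgP lim0|exact: cvg_lim lim0].
apply/cvgr0Pnorm_lt => e e0.
have e1 : 0 < Num.min 1 (e / (C + 1)) by rewrite lt_min ltr01 /= divr_gt0 // ltr_wpDl.
near=> h.
have : `|h| < Num.min 1 (e / (C + 1)) by near: h; exact: dnbhs0_lt.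
rewrite lt_min => /andP[h1 he].
rewrite /comp /shift /= {2}/exp_inv_poly ltxx subr0 addr0 /GRing.scale /= mulr1.
rewrite /exp_inv_poly; case: ifPn => hp; last by rewrite mulr0 normr0.
rewrite (gtr0_norm hp) in h1 he.
have := normr_horner_expRN_le p h^-1; rewrite invrK => H.
apply: le_lt_trans (H _) _; first by rewrite invr_ge1 ?ltW // unitfE gt_eqF.
apply: (@le_lt_trans _ _ ((C + 1) * h)); first by apply: ler_wpM2r; [exact: ltW|rewrite lerDl].
by rewrite mulrC -ltr_pdivlMr // ltr_wpDl.
Unshelve. all: by end_near. Qed.

Lemma is_derive_exp_inv_poly p t :
  is_derive t 1 (exp_inv_poly p) (exp_inv_poly (exp_inv_dpoly p) t).
Proof.
case: (ltgtP t 0) => [t0|t0|->].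
- exact: is_derive_exp_inv_poly_lt0.
- exact: is_derive_exp_inv_poly_gt0.
- exact: is_derive_exp_inv_poly0.
Qed.

Lemma derive1_exp_inv_poly p : derive1 (exp_inv_poly p) = exp_inv_poly (exp_inv_dpoly p).
Proof. by apply/funext => t; rewrite derive1E; case: (is_derive_exp_inv_poly p t). Qed.

Lemma derivable_upto_exp_inv_poly n p : derivable_upto n (exp_inv_poly p).
Proof.
elim: n p => [|n IH] p.
  by apply/derivable_upto0 => t; case: (is_derive_exp_inv_poly p t).
apply/derivable_uptoS; split; first by move=> t; case: (is_derive_exp_inv_poly p t).
by rewrite derive1_exp_inv_poly.
Qed.

End ExpInvPoly.

Section SmoothStep.
Context {R : realType}.
Implicit Types t : R.

Definition exp_inv : R -> R := exp_inv_poly 1.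

Lemma exp_inv_gt0 t : 0 < t -> 0 < exp_inv t.
Proof. by move=> t0; rewrite /exp_inv /exp_inv_poly t0 hornerC mul1r expR_gt0. Qed.

Lemma exp_inv_ge0 t : 0 <= exp_inv t.
Proof. by rewrite /exp_inv /exp_inv_poly; case: ifP; rewrite ?hornerC ?mul1r ?expR_ge0. Qed.

Lemma exp_inv_le0 t : t <= 0 -> exp_inv t = 0.
Proof. by move=> t0; rewrite /exp_inv /exp_inv_poly ltNge t0. Qed.

Definition smooth_step t := exp_inv t / (exp_inv t + exp_inv (1 - t)).

Lemma smooth_step_den_gt0 t : 0 < exp_inv t + exp_inv (1 - t).
Proof.
have [t0|t0] := leP t 0.
  by rewrite ltr_wpDl ?exp_inv_ge0 ?exp_inv_gt0 // subr_gt0 (le_lt_trans t0).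
by rewrite ltr_wpDr ?exp_inv_ge0 ?exp_inv_gt0.
Qed.

Lemma derivable_upto_smooth_step n : derivable_upto n smooth_step.
Proof.
apply: derivable_uptoM; first exact: derivable_upto_exp_inv_poly.
apply: derivable_uptoV => [t|]; first by rewrite gt_eqF ?smooth_step_den_gt0.
apply: derivable_uptoD; first exact: derivable_upto_exp_inv_poly.
have -> : (fun t => exp_inv (1 - t)) = fun t => exp_inv (-1 * t + 1).
  by apply/funext => t; rewrite mulN1r addrC.
by apply: derivable_upto_comp_affine; exact: derivable_upto_exp_inv_poly.
Qed.

Lemma smooth_step_le0 t : t <= 0 -> smooth_step t = 0.
Proof. by move=> t0; rewrite /smooth_step exp_inv_le0 // mul0r. Qed.

Lemma smooth_step_ge1 t : 1 <= t -> smooth_step t = 1.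
Proof.
move=> t1; rewrite /smooth_step (exp_inv_le0 (1 - t)) ?subr_le0 // addr0 divff //.
by rewrite gt_eqF // exp_inv_gt0 // (lt_le_trans ltr01).
Qed.

Lemma smooth_step_itv t : 0 <= smooth_step t <= 1.
Proof.
have den0 := smooth_step_den_gt0 t.
apply/andP; split; first by rewrite divr_ge0 ?exp_inv_ge0 ?ltW.
rewrite ler_pdivrMr // mul1r lerDl.
exact: exp_inv_ge0.
Qed.

Lemma continuous_derive1n_smooth_step k : continuous (derive1n k smooth_step).
Proof.
move=> x; apply/differentiable_continuous/derivable1_diffP.
exact: (derivable_upto_smooth_step k k x (leqnn k)).
Qed.

Lemma normr_derive1n_cst_le n (c t : R) : `|derive1n n (fun _ : R => c) t| <= `|c|.
Proof. by case: n => [|n] //; rewrite derive1n_cst normr0 normr_ge0. Qed.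

(* Outside [0, 1] the step is locally constant, so only the compact piece [0, 1] matters. *)
Lemma derive1n_smooth_step_bounded k :
  exists M : R, forall t, `|derive1n k smooth_step t| <= M.
Proof.
have [c _ Hc] := @EVT_max R (fun t => `|derive1n k smooth_step t|) 0 1 ler01
  (continuous_subspaceT (fun x => continuous_comp
     (continuous_derive1n_smooth_step k x) (@norm_continuous _ _ _))).
exists (Num.max 1 `|derive1n k smooth_step c|) => t.
have [t0|t0] := ltP t 0.
  have : \near t, smooth_step t = 0.
    by near=> s; apply: smooth_step_le0; apply: ltW; near: s; exact: lt_nbhsl.
  move=> /(near_eq_derive1n k)/nbhs_singleton ->.
  by rewrite (le_trans (normr_derive1n_cst_le _ _ _)) // normr0 le_max ler01.
have [t1|t1] := leP t 1.
  by rewrite le_max Hc ?orbT // in_itv /= t0 t1.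
have : \near t, smooth_step t = 1.
  by near=> s; apply: smooth_step_ge1; apply: ltW; near: s; exact: lt_nbhsr.
move=> /(near_eq_derive1n k)/nbhs_singleton ->.
by rewrite (le_trans (normr_derive1n_cst_le _ _ _)) // normr1 le_max lexx.
Unshelve. all: by end_near. Qed.

End SmoothStep.

Section Oscillation.
Context {R : realType}.
Variable tau : R -> R.

Lemma boundedly_oscillating_bound : boundedly_oscillating tau ->
  exists delta X M : R, 0 < delta /\
    forall x h, X <= x -> 0 <= h <= delta -> `|tau (x + h) - tau x| <= M.
Proof.
case=> d d0 /ereal_inf_lt[_ [V [X [_ XV]] <-]] supV.
pose osc x := ereal_sup [set (`|tau (x + h) - tau x|)%:E | h in `[0, d]%classic].
have [M oscM] : exists M : R, (ereal_sup (osc @` V) <= M%:E)%E.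
  move: supV; case: (ereal_sup _) => [r _| |]; first by exists r.
  - by rewrite ltxx.
  - by exists 0; rewrite leNye.
exists d, (X + 1), M; split=> // x h Xx /andP[h0 hd]; rewrite -lee_fin.
apply: le_trans oscM; apply: (@le_trans _ _ (osc x)).
  by apply: ereal_sup_ubound; exists h => //=; rewrite in_itv /= h0 hd.
by apply: ereal_sup_ubound; exists x => //; apply: XV; rewrite (lt_le_trans _ Xx) // ltrDl.
Qed.

Lemma oscillation_le_natmul {X d M : R} : 0 < d ->
  (forall x h, X <= x -> 0 <= h <= d -> `|tau (x + h) - tau x| <= M) ->
  forall (m : nat) x h, X <= x -> 0 <= h <= m%:R * d -> `|tau (x + h) - tau x| <= m%:R * M.
Proof.
move=> d0 oscM; elim=> [|m IH] x h Xx /andP[h0 hm].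
  have -> : h = 0 by apply/le_anti; rewrite h0 andbT -(mul0r d).
  by rewrite addr0 subrr normr0 mul0r.
have M0 : 0 <= M by apply: le_trans (normr_ge0 _) (oscM x 0 Xx _); rewrite lexx ltW.
have [hd|dh] := leP h d.
  by apply: le_trans (oscM x h Xx _) _; rewrite ?h0 ?hd // ler_peMl // ler1n.
have -> : tau (x + h) - tau x =
    (tau (x + (h - d) + d) - tau (x + (h - d))) + (tau (x + (h - d)) - tau x).
  by rewrite addrA subrK -addrA subrK.
rewrite -natr1 mulrDl mul1r addrC; apply: le_trans (ler_normD _ _) (lerD _ _).
  apply: IH => //; rewrite subr_ge0 (ltW dh) /= lerBlDr.
  by rewrite -[X in _ <= _ + X]mul1r -mulrDl natr1.
apply: oscM; last by rewrite lexx ltW.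
by rewrite (le_trans Xx) // lerDl subr_ge0 ltW.
Qed.

Lemma boundedly_oscillating_unit : boundedly_oscillating tau ->
  exists X B : R,
    forall x h, X <= x -> 0 <= h <= 1 -> `|tau (x + h) - tau x| <= B.
Proof.
move=> /boundedly_oscillating_bound[d [X [M [d0 oscM]]]].
exists X, ((Num.truncn d^-1).+1%:R * M) => x h Xx /andP[h0 h1]; apply: (oscillation_le_natmul d0 oscM) => //.
rewrite h0 (le_trans h1) // -ler_pdivrMr // div1r ltW //; exact: truncnS_gt.
Qed.

End Oscillation.

Section Interpolation.
Context {R : realType}.
Variables (tau : R -> R) (X B : R).
Hypothesis osc_tau : forall x h, X <= x -> 0 <= h <= 1 -> `|tau (x + h) - tau x| <= B.

Definition start : nat := (Num.truncn X).+1.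

Definition jump (n : nat) : R := if (start <= n)%N then tau n.+1%:R - tau n%:R else 0.

Definition level (n : nat) : R := \sum_(k < n) jump k.

(* All derivatives of the smooth step vanish at 0 and 1, so the pieces glue smoothly:
   on (m, m + 2), [interp] coincides with the smooth function [interp_near m]. *)
Definition interp (x : R) : R :=
  level (Num.truncn x) + jump (Num.truncn x) * smooth_step (x - (Num.truncn x)%:R).

Definition interp_near (m : nat) (x : R) : R :=
  level m + jump m * smooth_step (x - m%:R) + jump m.+1 * smooth_step (x - m.+1%:R).

Lemma start_gt : X < start%:R.
Proof. exact: truncnS_gt. Qed.

Lemma normr_jump_le n : `|jump n| <= B.
Proof.
rewrite /jump; case: ifP => startn.
  rewrite -natr1; apply: osc_tau; last by rewrite ler01 lexx.
  by apply/ltW/(lt_le_trans start_gt); rewrite ler_nat.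
by rewrite normr0 (le_trans (normr_ge0 _) (osc_tau X 0 (lexx X) _)) // lexx ler01.
Qed.

Lemma interp_lt1 x : x < 1 -> interp x = 0.
Proof.
move=> x1; rewrite /interp; have /truncn0Pn -> : ~~ (1 <= x) by rewrite -ltNge.
by rewrite /level big_ord0 /jump /= mul0r addr0.
Qed.

Lemma interp_near_eq m x : m%:R < x < m.+2%:R -> interp x = interp_near m x.
Proof.
move=> /andP[mx xm]; rewrite /interp /interp_near.
have [x1|x1] := ltP x m.+1%:R.
  have -> : Num.truncn x = m by apply: truncn_def; rewrite (ltW mx) x1.
  by rewrite (smooth_step_le0 (x - m.+1%:R)) ?subr_le0 ?ltW // mulr0 addr0.
have -> : Num.truncn x = m.+1 by apply: truncn_def; rewrite x1 xm.
by rewrite /level big_ord_recr /= (smooth_step_ge1 (x - m%:R)) ?mulr1 ?addrA // lerBrDl natr1.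
Qed.

Lemma derivable_upto_interp_near n m : derivable_upto n (interp_near m).
Proof.
apply: derivable_uptoD; first apply: derivable_uptoD; first exact: derivable_upto_cst.
all: by apply/derivable_uptoMl/derivable_upto_shift; exact: derivable_upto_smooth_step.
Qed.

Lemma derive1n_interp_near k m : derive1n k.+1 (interp_near m) = fun x =>
  jump m * derive1n k.+1 smooth_step (x - m%:R) +
  jump m.+1 * derive1n k.+1 smooth_step (x - m.+1%:R).
Proof.
have dS b : derivable_upto k (fun x => smooth_step (x + b)).
  exact/derivable_upto_shift/derivable_upto_smooth_step.
rewrite derive1nD; last 2 first.
- exact/derivable_uptoD/derivable_uptoMl/dS/derivable_upto_cst.
- exact/derivable_uptoMl/dS.
rewrite derive1nD ?derive1n_cst; last 2 first.
- exact: derivable_upto_cst.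
- exact/derivable_uptoMl/dS.
rewrite !derive1nMl // !derive1n_shift.
by apply/funext => x; rewrite add0r.
Qed.

Lemma near_interp (x : R) :
  (\forall y \near x, interp y = 0) \/ exists m, \forall y \near x, interp y = interp_near m y.
Proof.
have [x1|x1] := ltP x 1.
  by left; near=> y; apply: interp_lt1; near: y; exact: lt_nbhsl.
right; have x0 : 0 <= x by apply: le_trans x1; exact: ler01.
have := truncn_itv x0; have : (0 < Num.truncn x)%N by rewrite truncn_gt0.
case: (Num.truncn x) => [//|m] _ /andP[mx xm]; exists m.
near=> y; apply: interp_near_eq; apply/andP; split; near: y.
  by apply: lt_nbhsr; apply: lt_le_trans mx; rewrite ltr_nat.
exact: lt_nbhsl.
Unshelve. all: by end_near. Qed.

Lemma derivable_derive1n_interp k x : derivable (derive1n k interp) x 1.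
Proof.
have [near0|[m nearm]] := near_interp x; apply: near_eq_derivable1n.
- exact: near0.
- exact: (derivable_upto_cst k 0 k x (leqnn k)).
- exact: nearm.
- exact: (derivable_upto_interp_near k m k x (leqnn k)).
Qed.

Lemma continuous_derive1n_interp k : continuous (derive1n k interp).
Proof.
move=> x; apply/differentiable_continuous/derivable1_diffP.
exact: derivable_derive1n_interp.
Qed.

Lemma derive1n_interp_lt1 k x : x < 1 -> derive1n k.+1 interp x = 0.
Proof.
move=> x1; have : \forall y \near x, interp y = 0.
  by near=> y; apply: interp_lt1; near: y; exact: lt_nbhsl.
by move=> /(near_eq_derive1n k.+1)/nbhs_singleton ->; rewrite derive1n_cst.
Unshelve. all: by end_near. Qed.

Lemma derive1n_interp_bounded k : exists M : R, forall x, `|derive1n k.+1 interp x| <= M.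
Proof.
have [M SM] := @derive1n_smooth_step_bounded R k.+1.
exists (B * M + B * M) => x.
have M0 : 0 <= M := le_trans (normr_ge0 _) (SM 0).
have B0 : 0 <= B := le_trans (normr_ge0 _) (normr_jump_le 0).
have [near0|[m nearm]] := near_interp x.
  rewrite (nbhs_singleton (near_eq_derive1n k.+1 near0)) derive1n_cst normr0.
  by rewrite addr_ge0 // mulr_ge0.
rewrite (nbhs_singleton (near_eq_derive1n k.+1 nearm)) derive1n_interp_near.
apply: le_trans (ler_normD _ _) _.
by apply: lerD; rewrite normrM; apply: ler_pM => //; exact: normr_jump_le.
Qed.

Lemma level_start_add n : level (start + n) = tau (start + n)%:R - tau start%:R.
Proof.
elim: n => [|n IH].
  by rewrite addn0 subrr; apply: big1 => i _; rewrite /jump leqNgt ltn_ord.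
by rewrite addnS /level big_ord_recr /= -/(level _) IH /jump leq_addr; ring.
Qed.

Lemma Rintegral_derive1_interp x : 0 < x ->
  Rintegral lebesgue_measure `[0, x] (derive1 interp) = interp x.
Proof.
move=> x0; have cont := continuous_derive1n_interp 0.
rewrite /Rintegral (continuous_FTC2 x0 (F := interp)).
- by rewrite (interp_lt1 0) ?ltr01 //= subr0.
- exact/continuous_subspaceT/(continuous_derive1n_interp 1).
- split; first by move=> y _; exact: (derivable_derive1n_interp 0 y).
  + by apply: cvg_at_right_filter; exact: cont.
  + by apply: cvg_at_left_filter; exact: cont.
- by [].
Qed.

Lemma normr_tau_sub_interp_le x : start%:R <= x ->
  `|tau x - interp x| <= B + `|tau start%:R| + B.
Proof.
move=> startx; have x0 : 0 <= x by apply: le_trans startx.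
have /andP[nx xn] := truncn_itv x0.
have startn : (start <= Num.truncn x)%N by rewrite truncn_ge_nat.
rewrite /interp; set n := Num.truncn x in nx xn startn *.
have -> : tau x - (level n + jump n * smooth_step (x - n%:R)) =
    (tau (n%:R + (x - n%:R)) - tau n%:R) + tau start%:R - jump n * smooth_step (x - n%:R).
  by rewrite -(subnKC startn) level_start_add subnKC // [n%:R + _]addrC subrK; ring.
apply: le_trans (ler_normB _ _) (lerD (le_trans (ler_normD _ _) (lerD _ _)) _) => //.
  apply: osc_tau; first by apply/ltW/(lt_le_trans start_gt); rewrite ler_nat.
  by rewrite subr_ge0 nx /= lerBlDl natr1 ltW.
have /andP[S0 S1] := smooth_step_itv (x - n%:R).
rewrite normrM (ger0_norm S0) (le_trans _ (normr_jump_le n)) //.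
by rewrite ler_piMr ?normr_ge0.
Qed.

End Interpolation.

Theorem proposition3p5 (R : realType) (tau : R -> R) :
  lebesgue_measurable_fun tau -> boundedly_oscillating tau ->
  exists g : R -> R,
    [/\ (forall (n : nat) (x : R), derivable (derive1n n g) x 1),
        (forall x : R, x <= 0 -> g x = 0),
        (forall n : nat, measurable_fun setT (derive1n n g : measurableTypeR R -> R) /\
           exists M : R, {ae @lebesgue_measure R, forall x, `|derive1n n g x| <= M}) &
        exists x0 C : R, forall x : R, x0 <= x ->
          `|tau x - Rintegral (@lebesgue_measure R) `[0, x] g| <= C].
Proof.
move=> _ /boundedly_oscillating_unit[X [B osc_tau]].
exists (derive1 (interp tau X)); split.
- by move=> n x; rewrite -derive1Sn; exact: derivable_derive1n_interp.
- move=> x x0; rewrite -derive1n1 derive1n_interp_lt1 //.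
  by apply: le_lt_trans x0 _; exact: ltr01.
- move=> n; rewrite -derive1Sn; split.
    by apply: measurable_realfun.continuous_measurable_fun; exact: continuous_derive1n_interp.
  have [M bound] := derive1n_interp_bounded tau X B osc_tau n.
  by exists M; apply: aeW.
exists (start X)%:R, (B + `|tau (start X)%:R| + B) => x startx.
rewrite Rintegral_derive1_interp; first exact: normr_tau_sub_interp_le.
by apply: lt_le_trans startx; rewrite ltr0n.
Qed.
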